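(* If $\Gamma ; \Delta \vdash \mathcal{C}$ in $\lambda_{\mathrm{act}}$ and $\mathcal{C} \equiv \mathcal{D}$, then $[\![\mathcal{C}]\!] \equiv [\![\mathcal{D}]\!]$ in $\lambda_{\mathrm{ch}}$.
   Context: $\lambda_{\mathrm{act}}$: types $A,B,C ::= \mathbf{1}\mid A\xrightarrow{C}B\mid\mathsf{ActorRef}(A)$; values $V ::= \alpha\mid\lambda x.M\mid()$; computations $M ::= V\,W\mid\mathbf{let}\ x\Leftarrow M\ \mathbf{in}\ N\mid\mathbf{return}\ V\mid\mathbf{spawn}\ M\mid\mathbf{send}\ V\ W\mid\mathbf{receive}\mid\mathbf{self}$ with typing $\Gamma\mid C\vdash M:A$ ($C$ the mailbox type; standard rules, with $\Gamma\mid A\vdash\mathbf{receive}:A$, $\Gamma\mid A\vdash\mathbf{self}:\mathsf{ActorRef}(A)$, $\mathbf{spawn}\ M:\mathsf{ActorRef}(A)$ if $\Gamma\mid A\vdash M:\mathbf 1$, $\mathbf{send}\ V\ W:\mathbf 1$ if $V:A$, $W:\mathsf{ActorRef}(A)$, and $\lambda x.M:A\xrightarrow{C}B$ if $\Gamma,x:A\mid C\vdash M:B$). Configurations $\mathcal{C}::=\mathcal{C}\parallel\mathcal{D}\mid(\nu a)\mathcal{C}\mid\langle a,M,\vec V\rangle$ (actor $a$ evaluating $M$ with mailbox $\vec V$), typed by $\Gamma;\Delta\vdash\mathcal{C}$: (Par) disjoint split of the linear $\Delta$; (Pid) $\Gamma,a:\mathsf{ActorRef}(A);\Delta,a:A\vdash\mathcal{C}$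 gives $\Gamma;\Delta\vdash(\nu a)\mathcal{C}$; (Actor) $\Gamma,a:\mathsf{ActorRef}(A)\mid A\vdash M:\mathbf 1$ and $\Gamma,a:\mathsf{ActorRef}(A)\vdash V_i:A$ for all $i$ give $\Gamma,a:\mathsf{ActorRef}(A);a:A\vdash\langle a,M,\vec V\rangle$. $\lambda_{\mathrm{ch}}$: computations $V\,W\mid\mathbf{let}\ x\Leftarrow M\ \mathbf{in}\ N\mid\mathbf{return}\ V\mid\mathbf{fork}\ M\mid\mathbf{give}\ V\ W\mid\mathbf{take}\ V\mid\mathbf{newCh}$; configurations $\mathcal{C}\parallel\mathcal{D}\mid(\nu a)\mathcal{C}\mid a(\vec V)\mid M$ ($a(\vec V)$ a buffer). In both calculi, with configuration contexts $G ::= [\,]\mid G\parallel\mathcal{C}\mid(\nu a)G$, structural congruence $\equiv$ is the least congruence closed under $G[-]$ with $\mathcal{C}\parallel\mathcal{D}\equiv\mathcal{D}\parallel\mathcal{C}$, $\mathcal{C}\parallel(\mathcal{D}\parallel\mathcal{E})\equiv(\mathcal{C}\parallel\mathcal{D})\parallel\mathcal{E}$, and $\mathcal{C}\parallel(\nu a)\mathcal{D}\equiv(\nu a)(\mathcal{C}\parallel\mathcal{D})$ if $a\notin\mathsf{fv}(\mathcal{C})$. Translation $[\![-]\!]$ from $\lambda_{\mathrm{act}}$ to $\lambda_{\mathrm{ch}}$: values $[\![x]\!]=x$, $[\![a]\!]=a$, $[\![()]\!]=()$, $[\![\lambda x.M]\!]=\lambda x.\lambda ch.([\![M]\!]ch)$;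 computations parameterised by a channel $ch$: $[\![\mathbf{let}\ x\Leftarrow M\ \mathbf{in}\ N]\!]ch=\mathbf{let}\ x\Leftarrow[\![M]\!]ch\ \mathbf{in}\ [\![N]\!]ch$, $[\![V\,W]\!]ch=\mathbf{let}\ f\Leftarrow([\![V]\!]\,[\![W]\!])\ \mathbf{in}\ f\,ch$, $[\![\mathbf{return}\ V]\!]ch=\mathbf{return}\ [\![V]\!]$, $[\![\mathbf{self}]\!]ch=\mathbf{return}\ ch$, $[\![\mathbf{receive}]\!]ch=\mathbf{take}\ ch$, $[\![\mathbf{spawn}\ M]\!]ch=\mathbf{let}\ chMb\Leftarrow\mathbf{newCh}\ \mathbf{in}\ \mathbf{let}\ y\Leftarrow\mathbf{fork}([\![M]\!]chMb)\ \mathbf{in}\ \mathbf{return}\ chMb$, $[\![\mathbf{send}\ V\ W]\!]ch=\mathbf{give}\ [\![V]\!]\ [\![W]\!]$; configurations $[\![\mathcal{C}_1\parallel\mathcal{C}_2]\!]=[\![\mathcal{C}_1]\!]\parallel[\![\mathcal{C}_2]\!]$, $[\![(\nu a)\mathcal{C}]\!]=(\nu a)[\![\mathcal{C}]\!]$, $[\![\langle a,M,\vec V\rangle]\!]=a([\![\vec V]\!])\parallel([\![M]\!]a)$ (values translated pointwise). *)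

From Stdlib Require Import List Permutation Arith.
Import ListNotations.

Definition name := nat.
Definition avar := nat.

Inductive ty : Type :=
| TUnit : ty
| TFun : ty -> ty -> ty -> ty      (* TFun A C B  =  A -C-> B *)
| TRef : ty -> ty.

Inductive aval : Type :=
| AVVar : avar -> aval
| AVName : name -> aval
| AVLam : avar -> acomp -> aval
| AVUnit : aval
with acomp : Type :=
| AApp : aval -> aval -> acomp
| ALet : avar -> acomp -> acomp -> acomp
| AReturn : aval -> acomp
| ASpawn : acomp -> acomp
| ASend : aval -> aval -> acomp
| AReceive : acomp
| ASelf : acomp.

Inductive aconf : Type :=
| APar : aconf -> aconf -> aconf
| ANu : name -> aconf -> aconf
| AActor : name -> acomp -> list aval -> aconf.

Inductive atom : Type := AtVar : avar -> atom | AtName : name -> atom.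

Definition atom_eqb (x y : atom) : bool :=
  match x, y with
  | AtVar n, AtVar m => Nat.eqb n m
  | AtName n, AtName m => Nat.eqb n m
  | _, _ => false
  end.

Definition env := list (atom * ty).

Fixpoint lookup (G : env) (x : atom) : option ty :=
  match G with
  | [] => None
  | (y, A) :: G' => if atom_eqb x y then Some A else lookup G' x
  end.

(* Gamma |- V : A   and   Gamma | C |- M : A *)
Inductive vty : env -> aval -> ty -> Prop :=
| TV_Var : forall G x A, lookup G (AtVar x) = Some A -> vty G (AVVar x) A
| TV_Name : forall G a A, lookup G (AtName a) = Some A -> vty G (AVName a) A
| TV_Lam : forall G x M A C B,
    cty ((AtVar x, A) :: G) C M B ->
    vty G (AVLam x M) (TFun A C B)
| TV_Unit : forall G, vty G AVUnit TUnit
with cty : env -> ty -> acomp -> ty -> Prop :=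
| TC_App : forall G C V W A B,
    vty G V (TFun A C B) -> vty G W A -> cty G C (AApp V W) B
| TC_Let : forall G C x M N A B,
    cty G C M A -> cty ((AtVar x, A) :: G) C N B -> cty G C (ALet x M N) B
| TC_Return : forall G C V A, vty G V A -> cty G C (AReturn V) A
| TC_Spawn : forall G C M A,
    cty G A M TUnit -> cty G C (ASpawn M) (TRef A)
| TC_Send : forall G C V W A,
    vty G V A -> vty G W (TRef A) -> cty G C (ASend V W) TUnit
| TC_Receive : forall G A, cty G A AReceive A
| TC_Self : forall G A, cty G A ASelf (TRef A).

(* linear environment Delta : names with mailbox types *)
Definition lenv := list (name * ty).

Inductive confty : env -> lenv -> aconf -> Prop :=
| TConf_Par : forall G D D1 D2 C1 C2,
    Permutation D (D1 ++ D2) ->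
    confty G D1 C1 -> confty G D2 C2 -> confty G D (APar C1 C2)
| TConf_Pid : forall G D a A C,
    confty ((AtName a, TRef A) :: G) ((a, A) :: D) C -> confty G D (ANu a C)
| TConf_Actor : forall G a A M Vs,
    lookup G (AtName a) = Some (TRef A) ->
    cty G A M TUnit ->
    (forall V, In V Vs -> vty G V A) ->
    confty G [(a, A)] (AActor a M Vs).

Fixpoint fn_aval (V : aval) : list name :=
  match V with
  | AVVar _ => []
  | AVName a => [a]
  | AVLam _ M => fn_acomp M
  | AVUnit => []
  end
with fn_acomp (M : acomp) : list name :=
  match M with
  | AApp V W => fn_aval V ++ fn_aval W
  | ALet _ M N => fn_acomp M ++ fn_acomp N
  | AReturn V => fn_aval V
  | ASpawn M => fn_acomp M
  | ASend V W => fn_aval V ++ fn_aval W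
  | AReceive => []
  | ASelf => []
  end.

Fixpoint fn_aconf (C : aconf) : list name :=
  match C with
  | APar C1 C2 => fn_aconf C1 ++ fn_aconf C2
  | ANu a C => remove Nat.eq_dec a (fn_aconf C)
  | AActor a M Vs => a :: fn_acomp M ++ flat_map fn_aval Vs
  end.

(* structural congruence: least congruence closed under G[-]
   (G ::= [] | G || C | (nu a) G) with comm, assoc, scope extrusion *)
Inductive acong : aconf -> aconf -> Prop :=
| AC_refl : forall C, acong C C
| AC_sym : forall C D, acong C D -> acong D C
| AC_trans : forall C D E, acong C D -> acong D E -> acong C E
| AC_comm : forall C D, acong (APar C D) (APar D C)
| AC_assoc : forall C D E, acong (APar C (APar D E)) (APar (APar C D) E)
| AC_extr : forall C D a, ~ In a (fn_aconf C) ->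
    acong (APar C (ANu a D)) (ANu a (APar C D))
| AC_ctx_par : forall C D E, acong C D -> acong (APar C E) (APar D E)
| AC_ctx_nu : forall a C D, acong C D -> acong (ANu a C) (ANu a D).

(* variables of lambda_ch: the source variables, plus the distinct variables
   f, ch, chMb, y introduced by the translation (kept in a separate namespace,
   so they are fresh with respect to every source term) *)
Inductive cvar : Type :=
| CVOrig : avar -> cvar
| CVf | CVch | CVchMb | CVy.

Inductive cval : Type :=
| CVVar : cvar -> cval
| CVName : name -> cval
| CVLam : cvar -> ccomp -> cval
| CVUnit : cval
with ccomp : Type :=
| CApp : cval -> cval -> ccomp
| CLet : cvar -> ccomp -> ccomp -> ccomp
| CReturn : cval -> ccomp
| CFork : ccomp -> ccomp
| CGive : cval -> cval -> ccomp
| CTake : cval -> ccomp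
| CNewCh : ccomp.

Inductive cconf : Type :=
| CPar : cconf -> cconf -> cconf
| CNu : name -> cconf -> cconf
| CBuf : name -> list cval -> cconf
| CThread : ccomp -> cconf.

Fixpoint fn_cval (V : cval) : list name :=
  match V with
  | CVVar _ => []
  | CVName a => [a]
  | CVLam _ M => fn_ccomp M
  | CVUnit => []
  end
with fn_ccomp (M : ccomp) : list name :=
  match M with
  | CApp V W => fn_cval V ++ fn_cval W
  | CLet _ M N => fn_ccomp M ++ fn_ccomp N
  | CReturn V => fn_cval V
  | CFork M => fn_ccomp M
  | CGive V W => fn_cval V ++ fn_cval W
  | CTake V => fn_cval V
  | CNewCh => []
  end.

Fixpoint fn_cconf (C : cconf) : list name :=
  match C with
  | CPar C1 C2 => fn_cconf C1 ++ fn_cconf C2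
  | CNu a C => remove Nat.eq_dec a (fn_cconf C)
  | CBuf a Vs => a :: flat_map fn_cval Vs
  | CThread M => fn_ccomp M
  end.

Inductive ccong : cconf -> cconf -> Prop :=
| CC_refl : forall C, ccong C C
| CC_sym : forall C D, ccong C D -> ccong D C
| CC_trans : forall C D E, ccong C D -> ccong D E -> ccong C E
| CC_comm : forall C D, ccong (CPar C D) (CPar D C)
| CC_assoc : forall C D E, ccong (CPar C (CPar D E)) (CPar (CPar C D) E)
| CC_extr : forall C D a, ~ In a (fn_cconf C) ->
    ccong (CPar C (CNu a D)) (CNu a (CPar C D))
| CC_ctx_par : forall C D E, ccong C D -> ccong (CPar C E) (CPar D E)
| CC_ctx_nu : forall a C D, ccong C D -> ccong (CNu a C) (CNu a D).

Fixpoint tr_val (V : aval) : cval :=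
  match V with
  | AVVar x => CVVar (CVOrig x)
  | AVName a => CVName a
  | AVLam x M => CVLam (CVOrig x) (CReturn (CVLam CVch (tr_comp M (CVVar CVch))))
  | AVUnit => CVUnit
  end
with tr_comp (M : acomp) (ch : cval) : ccomp :=
  match M with
  | ALet x M N => CLet (CVOrig x) (tr_comp M ch) (tr_comp N ch)
  | AApp V W => CLet CVf (CApp (tr_val V) (tr_val W)) (CApp (CVVar CVf) ch)
  | AReturn V => CReturn (tr_val V)
  | ASelf => CReturn ch
  | AReceive => CTake ch
  | ASpawn M =>
      CLet CVchMb CNewCh
        (CLet CVy (CFork (tr_comp M (CVVar CVchMb))) (CReturn (CVVar CVchMb)))
  | ASend V W => CGive (tr_val V) (tr_val W)
  end.

Fixpoint tr_conf (C : aconf) : cconf :=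
  match C with
  | APar C1 C2 => CPar (tr_conf C1) (tr_conf C2)
  | ANu a C => CNu a (tr_conf C)
  | AActor a M Vs => CPar (CBuf a (map tr_val Vs)) (CThread (tr_comp M (CVName a)))
  end.

(* Structural congruence is generated by rules on configurations only, and the
   translation is a homomorphism for parallel composition and name restriction,
   so each rule of lambda_act maps onto the same rule of lambda_ch.  The only
   side condition, a ∉ fn(C) for scope extrusion, transfers because the
   translation introduces no free names: fn([[C]]) ⊆ fn(C). *)

From Stdlib Require Import List.
Import ListNotations.

Scheme aval_ind_mut := Induction for aval Sort Prop
with acomp_ind_mut := Induction for acomp Sort Prop.
Combined Scheme aval_acomp_ind from aval_ind_mut, acomp_ind_mut.

Lemma fn_tr_val_comp :
  (forall V a, In a (fn_cval (tr_val V)) -> In a (fn_aval V)) /\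
  (forall M ch a, In a (fn_ccomp (tr_comp M ch)) ->
     In a (fn_acomp M) \/ In a (fn_cval ch)).
Proof.
  apply aval_acomp_ind; intros; simpl in *; rewrite ?in_app_iff in *; firstorder.
Qed.

Lemma fn_tr_conf (C : aconf) (a : name) :
  In a (fn_cconf (tr_conf C)) -> In a (fn_aconf C).
Proof.
  destruct fn_tr_val_comp as [fn_tr_val fn_tr_comp].
  induction C as [C1 IH1 C2 IH2 | b C IH | b M Vs]; simpl;
    rewrite ?in_app_iff.
  - intros [Ha | Ha]; auto.
  - intros [Ha Hab]%in_remove. apply in_in_remove; auto.
  - intros [<- | [Hbuf | Hthread]]; [now left | |].
    + apply in_flat_map in Hbuf as [? [[V [<- HV]]%in_map_iff Ha]].
      right. right. apply in_flat_map. eauto.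
    + apply fn_tr_comp in Hthread as [HM | [<- | []]]; auto.
Qed.

Lemma tr_conf_cong (C C' : aconf) :
  acong C C' -> ccong (tr_conf C) (tr_conf C').
Proof.
  induction 1; simpl.
  - apply CC_refl.
  - now apply CC_sym.
  - now apply CC_trans with (tr_conf D).
  - apply CC_comm.
  - apply CC_assoc.
  - apply CC_extr. intros Ha%fn_tr_conf. contradiction.
  - now apply CC_ctx_par.
  - now apply CC_ctx_nu.
Qed.

Theorem lemma20 : forall (G : env) (D : lenv) (C C' : aconf),
  confty G D C -> acong C C' -> ccong (tr_conf C) (tr_conf C').
Proof.
  intros G D C C' _. apply tr_conf_cong.
Qed.
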